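(* Let $G$ be a finite group and $H\trianglelefteq G$ a normal subgroup with a surjection $H\to\Gamma$, where $\Gamma$, $\Phi$, $\Psi$, $X$ are as in the context, and regard $X$ as a representation of $H$ via this surjection. Let $N\subseteq G$ be as in the context, so $H\subseteq N\subseteq G$. (1) If $U\subseteq\mathrm{Ind}_H^NX$ is an irreducible representation of $N$, then $\mathrm{Ind}_N^GU$ is an irreducible representation of $G$. (2) If $V'\subseteq\mathrm{Ind}_H^GX$ is an irreducible representation of $G$, then there is an irreducible $N$-subrepresentation $U\subseteq\mathrm{Ind}_H^NX$ with $V'\cong\mathrm{Ind}_N^GU$.
   Context: All representations are over an algebraically closed field $E$ of characteristic zero. $V$ is a two-dimensional $E$-vector space and $\Gamma\subset\mathrm{PGL}(V)$ is a finite subgroup acting irreducibly on $\mathbf P(V)$ (so $\Gamma\cong A_4,S_4,A_5$ or $D_n$ of order $2n$, $n\ge3$ odd), with projective representation $\Phi$. $W$ is the space of trace-zero endomorphisms of $V$ with $\Gamma$ acting by conjugation; $X\subseteq W$ is the unique $\Gamma$-stable subspace on which $\Gamma$ acts irreducibly and faithfully ($X=W$ unless $\Gamma\cong D_n$, in which case $W=X\oplus\epsilon$, $\epsilon$ the quadratic character, $\dim X=2$); $\Psi$ is the linear representation of $\Gamma$ on $X$. Let $\mathrm{Ker}$ be the kernel of $H\to\Gamma$, $N(\mathrm{Ker})$ its normalizer in $G$, and $N(\mathrm{Ker})\to\mathrm{Aut}(\Gamma)$ the map induced by conjugation. $N$ is the preimage of $\mathrm{Aut}_\Psi(\Gamma)=\{\alpha\in\mathrm{Aut}(\Gamma):\Psi\circ\alpha\cong\Psi\}$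 (equivalently of $\mathrm{Aut}_\Phi(\Gamma)$) under this map. *)

From HB Require Import structures.
From mathcomp Require Import all_boot all_order all_algebra all_fingroup all_solvable all_field all_character.
Set Implicit Arguments. Unset Strict Implicit. Unset Printing Implicit Defensive.
Import GRing.Theory Num.Theory.
Local Open Scope ring_scope.

(* V = 'rV[algC]_2 (row vectors, matrices act on the right, as in MathComp).
   A finite subgroup Gamma of PGL(V) is given as a finite group gT together
   with a projective representation Phi : gT -> GL(V) which is injective as a
   map to PGL(V) (Phi x scalar only for x = 1). *)
Definition proj_rep_PGL2 (gT : finGroupType) (Phi : gT -> 'M[algC]_2) : Prop :=
  [/\ forall x, Phi x \in unitmx,
      forall x y, exists2 c : algC, c != 0 & Phi (x * y)%g = c *: (Phi x *m Phi y)
    & forall x, (exists c : algC, Phi x = c%:M) -> x = 1%g].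

Definition irreducible_on_PV (gT : finGroupType) (Phi : gT -> 'M[algC]_2) : Prop :=
  ~ exists2 v : 'rV[algC]_2, v != 0 & forall x, (v *m Phi x <= v)%MS.

(* The conjugation action of Gamma on End(V) = 'M_2 (identified with
   'rV_(2*2) via mxvec): A |-> Phi(x)^-1 A Phi(x).  Scalars cancel, so this is
   a genuine linear representation of Gamma. *)
Definition conj_mx (gT : finGroupType) (Phi : gT -> 'M[algC]_2) (x : gT)
  : 'M[algC]_(2 * 2) :=
  lin1_mx (fun v : 'rV[algC]_(2 * 2) => mxvec (invmx (Phi x) *m vec_mx v *m Phi x)).

Definition in_traceless (m : nat) (Xm : 'M[algC]_(m, 2 * 2)) : Prop :=
  forall i, \tr (vec_mx (row i Xm)) = 0.

Definition faithful_on (gT : finGroupType) (Gam : {group gT}) (n : nat)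
  (rW : mx_representation algC Gam n) (Xm : 'M[algC]_n) : Prop :=
  forall x, x \in Gam -> Xm *m rW x = Xm -> x = 1%g.

(* N = preimage in N_G(Ker) of Aut_Psi(Gamma), Ker = ker(f : H -> Gamma).
   For g in N_G(Ker), alpha_g is the automorphism f h |-> f (h ^ g) of Gamma,
   and Psi o alpha_g ~= Psi is expressed by equality of characters
   (char. 0: representations are determined by their characters). *)
Definition N_of (gT rT : finGroupType) (G H : {set gT}) (Hg : {group gT})
  (f : {morphism Hg >-> rT}) (psi0 : rT -> algC) : {set gT} :=
  [set g in ('N_G('ker f))%g | [forall h in H, psi0 (f (h ^ g)%g) == psi0 (f h)]].

From HB Require Import structures.
From mathcomp Require Import all_boot all_order all_algebra all_fingroup all_solvable all_field all_character.
Import GRing.Theory Num.Theory.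
Local Open Scope ring_scope.

(* Write psi0 for the character of Gamma = f @* H on the
   simple module X and psi = psi0 o f for its inflation to H.  The theorem is
   Clifford's correspondence for the irreducible character psi of the normal
   subgroup H of G, once N is recognised as the inertia group I_G(psi):
   - X simple gives psi0, hence psi, irreducible;
   - Gamma faithful on X gives cfker psi0 = 1, hence cfker psi = ker f;
   - for such psi, the group N of elements normalising ker f whose twist
     alpha_g preserves psi0 is exactly the stabiliser I_G(psi) of psi, since
     conjugating psi by g is inflating psi0 o alpha_g, and every g fixing psi
     normalises cfker psi = ker f;
   - Clifford's theorem (constt_Inertia_bijection) says Ind_N^G is a
     bijection from the constituents of Ind_H^N psi onto those of Ind_H^G psi. *)

Section SimpleSubmodule.

Variables (gT : finGroupType) (K : {group gT}) (n : nat).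
Variables (rK : mx_representation algC K n) (U : 'M[algC]_n).
Variable modU : mxmodule rK U.

Lemma submod_char_irr : mxsimple rK U -> cfRepr (submod_repr modU) \in irr K.
Proof.
move=> simU; apply/irr_reprP.
exists (Representation (submod_repr modU)) => //.
exact/(submod_mx_irr modU).
Qed.

Lemma submod_cfker_faithful :
  faithful_on rK U -> cfker (cfRepr (submod_repr modU)) = 1%g.
Proof.
move=> faithU; rewrite cfker_repr rker_submod.
apply/eqP; rewrite eqEsubset sub1G andbT.
apply/subsetP => x /setIdP[Kx /eqP fixU]; rewrite inE; apply/eqP.
exact: faithU.
Qed.

End SimpleSubmodule.

Section Inflation.

Variables (gT rT : finGroupType) (G H : {group gT}) (f : {morphism H >-> rT}).
Variable psi0 : 'CF(f @* H).
Local Notation psi := (cfMorph psi0 : 'CF(H)).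

Hypothesis nsHG : (H <| G)%g.
Hypothesis faith_psi0 : cfker psi0 = 1%g.

Lemma cfker_morph_faithful : cfker psi = ('ker f)%g.
Proof.
rewrite cfker_morph // faith_psi0.
by apply/setIidPr; exact: subsetIl.
Qed.

(* The group N_of G H f psi0 (elements of G normalising ker f whose twist of
   psi0 is psi0) is the inertia group of psi in G: conjugating psi by g is
   inflating the twisted psi0, and any g fixing psi normalises cfker psi. *)
Lemma N_of_inertia : N_of G H f psi0 = 'I_G[psi]%g.
Proof.
have nHG := normal_norm nsHG.
apply/setP => g; rewrite /N_of !inE; apply/idP/idP.
- case/andP=> /andP[Gg _] /forallP twist_psi0.
  have nHg : g \in 'N(H)%g := subsetP nHG g Gg.
  rewrite Gg; move: (nHg); rewrite inE => -> /=.
  apply/eqP/cfun_inP => x Hx; rewrite cfConjgE //.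
  have Hx' : (x ^ g^-1)%g \in H by rewrite memJ_norm ?groupV.
  have /implyP/(_ Hx')/eqP := twist_psi0 (x ^ g^-1)%g.
  by rewrite conjgKV => eq_psi0; rewrite !cfMorphE.
- case/and3P=> Gg nHg' /eqP fix_psi.
  have nHg : g \in 'N(H)%g by rewrite inE.
  have Ig : g \in inertia psi by rewrite !inE nHg' fix_psi eqxx.
  apply/andP; split.
    by rewrite Gg /= -cfker_morph_faithful -cfker_conjg // fix_psi.
  apply/forallP => h; apply/implyP => Hh.
  have Hhg : (h ^ g)%g \in H by rewrite memJ_norm.
  by rewrite -!cfMorphE // (inertia_valJ _ Ig).
Qed.

End Inflation.

Lemma clifford_correspondence (gT : finGroupType) (G H : {group gT}) (t : Iirr H) :
  (H <| G)%g ->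
  let T := 'I_G['chi_t]%G in
  (forall i : Iirr T, i \in irr_constt ('Ind[T] 'chi_t) -> 'Ind[G] 'chi_i \in irr G)
  /\
  (forall j : Iirr G, j \in irr_constt ('Ind[G] 'chi_t) ->
     exists2 i : Iirr T, i \in irr_constt ('Ind[T] 'chi_t) & 'chi_j = 'Ind[G] 'chi_i).
Proof.
move=> nsHG T; have [Ind_irr _ im_Ind _ _] := constt_Inertia_bijection t nsHG.
split=> [i Ti | j]; first exact: Ind_irr.
rewrite -im_Ind => /imsetP[i Ti ->].
by exists i => //; rewrite cfIirrE // Ind_irr.
Qed.

Theorem lemma4p7
  (gT rT : finGroupType) (G H : {group gT}) (f : {morphism H >-> rT})
  (Phi : rT -> 'M[algC]_2)
  (rW : mx_representation algC (f @* H)%G (2 * 2))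
  (Xm : 'M[algC]_(2 * 2)) (modX : mxmodule rW Xm)
  (N : {group gT}) :
  (H <| G)%g ->
  (f @* H)%g = [set: rT] ->
  proj_rep_PGL2 Phi -> irreducible_on_PV Phi ->
  (forall x, rW x = conj_mx Phi x) ->
  in_traceless Xm -> mxsimple rW Xm -> faithful_on rW Xm ->
  let psi0 : 'CF(f @* H) := cfRepr (submod_repr modX) in
  let psi : 'CF(H) := cfMorph psi0 in
  N :=: N_of G H f psi0 ->
  (forall i : Iirr N, i \in irr_constt ('Ind[N] psi) -> 'Ind[G] 'chi_i \in irr G)
  /\
  (forall j : Iirr G, j \in irr_constt ('Ind[G] psi) ->
     exists2 i : Iirr N, i \in irr_constt ('Ind[N] psi) & 'chi_j = 'Ind[G] 'chi_i).
Proof.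
move=> nsHG _ _ _ _ _ simX faithX psi0 psi defN.
have psi_irr : psi \in irr H by rewrite cfMorph_irr ?submod_char_irr.
have [t Dt] := irrP psi_irr.
have N_inertia : N = 'I_G['chi_t]%G.
  apply: val_inj; rewrite /= defN -Dt.
  exact/N_of_inertia/submod_cfker_faithful.
by rewrite Dt N_inertia; exact: clifford_correspondence.
Qed.
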